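(* For every instance such that $|S_2|>\pi_1+\pi_3+\pi_4-1$, $|S_2|\ge 4$ and $|S_2|$ is even, we have $H^{PW''}\le \tfrac{32000}{16947}H^*$ (note $\tfrac{32000}{16947}\approx 1.888$).
   Context: An instance consists of an integer $n\ge 1$ and growth rates $1=h(1)\ge h(2)\ge\cdots\ge h(n)>0$ of bamboos $b_1,\dots,b_n$. Bamboo Garden Trimming (discrete version): - All heights are $0$ initially. - On each day $t=1,2,\dots$ every bamboo $b_j$ grows by $h(j)$. - At the end of each day the gardener cuts exactly one bamboo $\sigma(t)\in\{1,\dots,n\}$ back to height $0$. The height of a schedule $\sigma:\mathbb{N}\to\{1,\dots,n\}$ is the supremum, over all days $t$ and all $j$, of the height of $b_j$ at the end of day $t$ just before the cut. $H^*$ denotes the infimum of this height over all schedules. Value of algorithm PW'': - Split $\{1,\dots,n\}$ into four sets: - $S_1=\{j: \tfrac23<h(j)\le 1\}$; - $S_2=\{j:\tfrac12<h(j)\le\tfrac23\}$; - $S_3=\{j: h(j)\le\tfrac12 \text{ and } \tfrac23 2^{-k}<h(j)\le 2^{-k}\text{ for some integer }k\ge1\}$; - $S_4=\{j: h(j)\le\tfrac12\text{ and } 2^{-(k+1)}<h(j)\le \tfrac23 2^{-k}\text{ for some integer }k\ge 1\}$. - Modified growths: $h''(j)=2^{-k}$ for $j\in S_3$ and $h''(j)=\tfrac23 2^{-k}$ for $j\in S_4$, with $k$ as in the definition of the set. - Let $\pi_1=|S_1|$, $sh_3=\sum_{j\in S_3}h''(j)$, $sh_4=\sum_{j\in S_4}h''(j)$,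 $\pi_3=\lfloor sh_3\rfloor$, $\pi_4=\lfloor sh_4\rfloor$, $f_3=sh_3-\pi_3$, $f_4=sh_4-\pi_4$. - Option (a): $\pi_R(a)=\lceil f_3+f_4\rceil$ and $z(a)=\pi_1+|S_2|+\pi_3+\pi_4+\pi_R(a)$. - Option (b): if $S_2=\emptyset$ put $z(b)=+\infty$. Otherwise let $h^*=\max_{j\in S_2}h(j)$ and $f_2=\tfrac12$ if $|S_2|$ is odd, $f_2=0$ if $|S_2|$ is even. Then $\pi_R(b)=\lceil f_2+f_3+f_4\rceil$ and $z(b)=2h^*\,(\pi_1+\lfloor |S_2|/2\rfloor+\pi_3+\pi_4+\pi_R(b))$. - The value returned by algorithm PW'' is $H^{PW''}=\min\{z(a),z(b)\}$. The paper takes this as the maximum height of the periodic pinwheel trimming schedule that it builds from these partitions. *)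

From Stdlib Require Import Reals Lra Lia ZArith Arith.
From Stdlib Require Import Classical ClassicalDescription.
Open Scope R_scope.

Definition valid_instance (n : nat) (h : nat -> R) : Prop :=
  (1 <= n)%nat /\ h 1%nat = 1 /\
  (forall j, (1 <= j)%nat -> (j < n)%nat -> h (S j) <= h j) /\
  0 < h n.

(* sigma t = bamboo cut at the end of day t (t >= 1). *)
Definition valid_schedule (n : nat) (sigma : nat -> nat) : Prop :=
  forall t, (1 <= t)%nat -> (1 <= sigma t)%nat /\ (sigma t <= n)%nat.

(* height of bamboo j at the end of day t, just before the cut of day t;
   day 0 is the initial state (height 0). *)
Fixpoint precut (h : nat -> R) (sigma : nat -> nat) (j t : nat) : R :=
  match t with
  | O => 0
  | S t' => (if Nat.eqb (sigma t') j then 0 else precut h sigma j t') + h j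
  end.

Definition height_bounded_by (n : nat) (h : nat -> R) (sigma : nat -> nat)
    (M : R) : Prop :=
  forall t j, (1 <= t)%nat -> (1 <= j)%nat -> (j <= n)%nat ->
    precut h sigma j t <= M.

Definition Rfloor (x : R) : R := IZR (Int_part x).
Definition Rceil (x : R) : R := - Rfloor (- x).

Definition inS1 (x : R) : Prop := 2/3 < x /\ x <= 1.
Definition inS2 (x : R) : Prop := 1/2 < x /\ x <= 2/3.
Definition inS3 (x : R) : Prop :=
  x <= 1/2 /\ exists k : nat, (1 <= k)%nat /\ 2/3 * (/2)^k < x /\ x <= (/2)^k.
Definition inS4 (x : R) : Prop :=
  x <= 1/2 /\ exists k : nat, (1 <= k)%nat /\ (/2)^(S k) < x /\ x <= 2/3 * (/2)^k.

(* the dyadic exponent k with 2^-(k+1) < x <= 2^-k, i.e. k = floor(-log2 x);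
   for x in S3 or S4 this is the k of the definition of the set. *)
Definition kexp (x : R) : nat := Z.to_nat (Int_part (- ln x / ln 2)).

Definition h3 (x : R) : R := (/2)^(kexp x).
Definition h4 (x : R) : R := 2/3 * (/2)^(kexp x).

Definition indic (P : Prop) (v : R) : R :=
  if excluded_middle_informative P then v else 0.

Fixpoint sum1 (n : nat) (f : nat -> R) : R :=
  match n with O => 0 | S m => sum1 m f + f (S m) end.

Fixpoint card1 (n : nat) (P : R -> Prop) (h : nat -> R) : nat :=
  match n with
  | O => O
  | S m => (card1 m P h + if excluded_middle_informative (P (h (S m))) then 1 else 0)%nat
  end.

(* max_{j in S2} h j (0 if S2 empty; only used when S2 is nonempty) *)
Fixpoint maxS2 (n : nat) (h : nat -> R) : R :=
  match n with
  | O => 0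
  | S m => if excluded_middle_informative (inS2 (h (S m)))
           then Rmax (maxS2 m h) (h (S m)) else maxS2 m h
  end.

Section PW.
Variables (n : nat) (h : nat -> R).

Definition pi1 : R := INR (card1 n inS1 h).
Definition s2 : nat := card1 n inS2 h.
Definition sh3 : R := sum1 n (fun j => indic (inS3 (h j)) (h3 (h j))).
Definition sh4 : R := sum1 n (fun j => indic (inS4 (h j)) (h4 (h j))).
Definition pi3 : R := Rfloor sh3.
Definition pi4 : R := Rfloor sh4.
Definition f3 : R := sh3 - pi3.
Definition f4 : R := sh4 - pi4.

Definition z_a : R := pi1 + INR s2 + pi3 + pi4 + Rceil (f3 + f4).

Definition f2 : R := if Nat.odd s2 then 1/2 else 0.
(* z_b, meaningful only when S2 is nonempty (otherwise z_b = +infinity) *)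
Definition z_b : R :=
  2 * maxS2 n h * (pi1 + INR (Nat.div2 s2) + pi3 + pi4 + Rceil (f2 + f3 + f4)).

Definition H_PW : R := if Nat.eqb s2 0 then z_a else Rmin z_a z_b.
End PW.

(* Along a schedule of height M the total height stays bounded, while each day
   it grows by sum h and the single cut removes at most M; hence sum h <= M.
   Bounding each rate from below by its share of the pinwheel densities (2/3 on
   S1, h on S2, (2/3) h'' on S3 and S4, with slack 1/3 at h(1) = 1) and using
   that the elements of S2 exceed 1/2 gives, for |S2| = 2k,
   M >= 1/3 + (2/3)(pi1 + sh3 + sh4) + k - 1/2 + h*.  On the other side
   z(b) <= 2h*(pi1 + pi3 + pi4 + k + f3 + f4 + 1), and the hypothesis on |S2|
   forces the integer pi1 + pi3 + pi4 to be at most 2k; comparing the two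
   bounds is then a polynomial inequality in h* in (1/2, 2/3] and k >= 2. *)
From Stdlib Require Import Reals Lra Lia Psatz ZArith ClassicalDescription.
Open Scope R_scope.

Lemma sum1_ext n f g : (forall j, (1 <= j)%nat -> (j <= n)%nat -> f j = g j) ->
  sum1 n f = sum1 n g.
Proof.
  induction n as [|n IH]; intros Hfg; simpl; [reflexivity|].
  rewrite IH, Hfg; [reflexivity|lia|lia|].
  intros j ? ?; apply Hfg; lia.
Qed.

Lemma sum1_le n f g : (forall j, (1 <= j)%nat -> (j <= n)%nat -> f j <= g j) ->
  sum1 n f <= sum1 n g.
Proof.
  induction n as [|n IH]; intros Hfg; simpl; [lra|].
  assert (sum1 n f <= sum1 n g) by (apply IH; intros; apply Hfg; lia).
  assert (f (S n) <= g (S n)) by (apply Hfg; lia).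
  lra.
Qed.

Lemma sum1_le_slack_first n f g b : (1 <= n)%nat ->
  (forall j, (1 <= j)%nat -> (j <= n)%nat -> f j <= g j) ->
  f 1%nat + b <= g 1%nat ->
  sum1 n f + b <= sum1 n g.
Proof.
  induction n as [|[|n] IH]; intros Hn Hfg H1; simpl in *; [lia|lra|].
  assert (sum1 n f + f (S n) + b <= sum1 n g + g (S n))
    by (apply IH; [lia|intros; apply Hfg; lia|exact H1]).
  assert (f (S (S n)) <= g (S (S n))) by (apply Hfg; lia).
  lra.
Qed.

Lemma sum1_add n f g : sum1 n (fun j => f j + g j) = sum1 n f + sum1 n g.
Proof. induction n as [|n IH]; simpl; [lra|]. rewrite IH; lra. Qed.

Lemma sum1_const n c : sum1 n (fun _ => c) = INR n * c.
Proof. induction n as [|n IH]; simpl sum1; [simpl; lra|]. rewrite IH, S_INR; lra. Qed.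

Lemma sum1_nonneg n f : (forall j, 0 <= f j) -> 0 <= sum1 n f.
Proof. intros Hf; induction n as [|n IH]; simpl; [lra|]. specialize (Hf (S n)); lra. Qed.

Lemma sum1_drop n f s : (1 <= s)%nat -> (s <= n)%nat ->
  sum1 n (fun j => if Nat.eqb s j then 0 else f j) = sum1 n f - f s.
Proof.
  induction n as [|n IH]; intros Hs Hsn; simpl sum1; [lia|].
  destruct (Nat.eq_dec s (S n)) as [->|Hne].
  - rewrite Nat.eqb_refl, (sum1_ext n _ f); [lra|].
    intros j ? ?; destruct (Nat.eqb_spec (S n) j); [lia|reflexivity].
  - rewrite IH by lia. destruct (Nat.eqb_spec s (S n)); [lia|lra].
Qed.

Lemma total_precut_succ n h sigma t : valid_schedule n sigma -> (1 <= t)%nat ->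
  sum1 n (fun j => precut h sigma j (S t)) =
  sum1 n (fun j => precut h sigma j t) + sum1 n h - precut h sigma (sigma t) t.
Proof.
  intros Hs Ht; simpl precut.
  rewrite sum1_add, (sum1_drop n (fun j => precut h sigma j t)) by apply Hs, Ht.
  lra.
Qed.

Lemma sum_rates_le_height n h sigma M :
  valid_schedule n sigma -> height_bounded_by n h sigma M -> sum1 n h <= M.
Proof.
  intros Hs Hb.
  set (total t := sum1 n (fun j => precut h sigma j t)).
  assert (Hgrowth : forall t, sum1 n h + INR t * (sum1 n h - M) <= total (S t)).
  { induction t as [|t IH].
    - unfold total; simpl INR.
      rewrite (sum1_ext n (fun j => precut h sigma j 1) h); [lra|].
      intros j _ _; cbn [precut]; destruct (Nat.eqb (sigma 0%nat) j); lra.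
    - unfold total in IH |- *; rewrite S_INR, total_precut_succ; [|exact Hs|lia].
      assert (precut h sigma (sigma (S t)) (S t) <= M)
        by (apply Hb; [lia|apply Hs; lia..]).
      lra. }
  assert (Hbound : forall t, (1 <= t)%nat -> total t <= INR n * M).
  { intros t Ht; unfold total; rewrite <- sum1_const.
    apply sum1_le; intros; apply Hb; auto. }
  destruct (Rle_or_lt (sum1 n h) M) as [Hle|Hgt]; [exact Hle|exfalso].
  destruct (INR_unbounded ((INR n * M - sum1 n h) / (sum1 n h - M))) as [t Ht].
  specialize (Hgrowth t); specialize (Hbound (S t) ltac:(lia)).
  apply (Rmult_lt_compat_r (sum1 n h - M)) in Ht; [|lra].
  unfold Rdiv in Ht; rewrite Rmult_assoc, Rinv_l in Ht; lra.
Qed.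

Lemma kexp_spec x k : (/2)^(S k) < x -> x <= (/2)^k -> kexp x = k.
Proof.
  intros Hlo Hhi.
  assert (Hpow : 0 < (/2)^(S k)) by (apply pow_lt; lra).
  assert (Hln2 : 0 < ln 2) by (pose proof ln_lt_2; lra).
  assert (Hln_pow : forall m, ln ((/2)^m) = - INR m * ln 2)
    by (intros m; rewrite ln_pow, ln_Rinv by lra; ring).
  assert (Hlo' : ln ((/2)^(S k)) < ln x) by (apply ln_increasing; lra).
  assert (Hhi' : ln x <= ln ((/2)^k)).
  { destruct (Rle_lt_or_eq_dec _ _ Hhi) as [Hlt|Heq]; [|rewrite Heq; lra].
    left; apply ln_increasing; lra. }
  rewrite !Hln_pow, S_INR in *.
  assert (Hy : - ln x / ln 2 * ln 2 = - ln x) by (field; lra).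
  assert (INR k <= - ln x / ln 2) by (apply (Rmult_le_reg_r (ln 2)); lra).
  assert (- ln x / ln 2 < INR k + 1) by (apply (Rmult_lt_reg_r (ln 2)); lra).
  unfold kexp; rewrite <- (Int_part_spec _ (Z.of_nat k)); [apply Nat2Z.id|].
  rewrite <- INR_IZR_INZ; lra.
Qed.

Lemma inS3_kexp x : inS3 x -> 2/3 * (/2)^(kexp x) < x <= (/2)^(kexp x).
Proof.
  intros [_ [k [_ [Hlo Hhi]]]].
  assert (Hpow : 0 < (/2)^k) by (apply pow_lt; lra).
  rewrite (kexp_spec x k); simpl; lra.
Qed.

Lemma inS4_kexp x : inS4 x -> (/2)^(S (kexp x)) < x <= 2/3 * (/2)^(kexp x).
Proof.
  intros [_ [k [_ [Hlo Hhi]]]].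
  assert (Hpow : 0 < (/2)^k) by (apply pow_lt; lra).
  rewrite (kexp_spec x k); simpl in *; lra.
Qed.

Definition lb_weight (x : R) : R :=
  2/3 * indic (inS1 x) 1 + indic (inS2 x) x
  + 2/3 * indic (inS3 x) (h3 x) + 2/3 * indic (inS4 x) (h4 x).

Lemma lb_weight_le x : 0 <= x -> lb_weight x <= x.
Proof.
  intros Hx; unfold lb_weight, indic.
  destruct (excluded_middle_informative (inS1 x)) as [H1|H1];
  destruct (excluded_middle_informative (inS2 x)) as [H2|H2];
  destruct (excluded_middle_informative (inS3 x)) as [H3|H3];
  destruct (excluded_middle_informative (inS4 x)) as [H4|H4];
  try pose proof (inS3_kexp x H3); try pose proof (inS4_kexp x H4);
  try destruct H3 as [? _]; try destruct H4 as [? _];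
  unfold inS1, inS2, h3, h4 in *; simpl in *; lra.
Qed.

Lemma lb_weight_1 : lb_weight 1 + 1/3 <= 1.
Proof.
  unfold lb_weight, indic.
  destruct (excluded_middle_informative (inS1 1)) as [H1|H1];
  destruct (excluded_middle_informative (inS2 1)) as [H2|H2];
  destruct (excluded_middle_informative (inS3 1)) as [H3|H3];
  destruct (excluded_middle_informative (inS4 1)) as [H4|H4];
  try destruct H3 as [? _]; try destruct H4 as [? _];
  unfold inS1, inS2 in *; lra.
Qed.

Definition sh2 (n : nat) (h : nat -> R) : R :=
  sum1 n (fun j => indic (inS2 (h j)) (h j)).

Lemma sum_lb_weight n h :
  sum1 n (fun j => lb_weight (h j)) =
  2/3 * pi1 n h + sh2 n h + 2/3 * sh3 n h + 2/3 * sh4 n h.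
Proof.
  unfold pi1, sh2, sh3, sh4.
  induction n as [|n IH]; simpl; [lra|].
  rewrite plus_INR, IH; unfold lb_weight, indic.
  destruct (excluded_middle_informative (inS1 (h (S n)))); simpl; lra.
Qed.

Lemma valid_instance_nonneg n h : valid_instance n h ->
  forall j, (1 <= j)%nat -> (j <= n)%nat -> 0 <= h j.
Proof.
  intros (_ & _ & Hdec & Hpos) j Hj Hjn.
  assert (Hmin : forall d i, (1 <= i)%nat -> (i + d = n)%nat -> h n <= h i).
  { induction d as [|d IH]; intros i Hi Hid.
    - replace i with n by lia; lra.
    - apply (Rle_trans _ (h (S i))); [apply IH; lia|apply Hdec; lia]. }
  specialize (Hmin (n - j)%nat j Hj ltac:(lia)); lra.
Qed.

Lemma sum_rates_ge_lb n h : valid_instance n h ->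
  1/3 + 2/3 * pi1 n h + sh2 n h + 2/3 * sh3 n h + 2/3 * sh4 n h <= sum1 n h.
Proof.
  intros Hv.
  assert (Hslack : sum1 n (fun j => lb_weight (h j)) + 1/3 <= sum1 n h).
  { pose proof Hv as (Hn & H1 & _).
    apply sum1_le_slack_first; [exact Hn| |rewrite H1; apply lb_weight_1].
    intros j ? ?; apply lb_weight_le; eapply valid_instance_nonneg; eauto. }
  rewrite sum_lb_weight in Hslack; lra.
Qed.

Lemma half_s2_le_sh2 n h : INR (s2 n h) / 2 <= sh2 n h.
Proof.
  unfold s2, sh2; induction n as [|n IH]; simpl; [lra|].
  rewrite plus_INR; unfold indic at 2.
  destruct (excluded_middle_informative (inS2 (h (S n)))) as [H2|_];
    [unfold inS2 in H2|]; simpl; lra.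
Qed.

Lemma maxS2_range n h : 0 <= maxS2 n h <= 2/3.
Proof.
  induction n as [|n IH]; simpl; [lra|].
  destruct (excluded_middle_informative (inS2 (h (S n)))) as [H2|_]; [|exact IH].
  unfold inS2, Rmax in *; destruct (Rle_dec (maxS2 n h) (h (S n))); lra.
Qed.

Lemma maxS2_gt_half n h : (1 <= s2 n h)%nat -> 1/2 < maxS2 n h.
Proof.
  unfold s2; induction n as [|n IH]; simpl; [lia|].
  destruct (excluded_middle_informative (inS2 (h (S n)))) as [H2|_]; intros Hcard.
  - unfold inS2 in H2; pose proof (Rmax_r (maxS2 n h) (h (S n))); lra.
  - apply IH; lia.
Qed.

Lemma maxS2_le_sh2 n h : maxS2 n h - 1/2 <= sh2 n h - INR (s2 n h) / 2.
Proof.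
  induction n as [|n IH]; [unfold s2, sh2; simpl; lra|].
  pose proof (half_s2_le_sh2 n h) as Hhalf.
  unfold s2, sh2 in *; simpl; rewrite plus_INR; unfold indic at 2.
  destruct (excluded_middle_informative (inS2 (h (S n)))) as [H2|_]; simpl; [|lra].
  unfold inS2, Rmax in *; destruct (Rle_dec (maxS2 n h) (h (S n))); lra.
Qed.

Lemma frac_range x : 0 <= x - Rfloor x < 1.
Proof. unfold Rfloor; pose proof (base_Int_part x); lra. Qed.

Lemma Rfloor_nonneg x : 0 <= x -> 0 <= Rfloor x.
Proof.
  intros Hx; unfold Rfloor; apply IZR_le.
  assert (-1 < Int_part x)%Z by (apply lt_IZR; pose proof (base_Int_part x); lra).
  lia.
Qed.

Lemma Rceil_le x : Rceil x <= x + 1.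
Proof. unfold Rceil; pose proof (frac_range (- x)); lra. Qed.

Lemma IZR_le_of_gt_pred (a b : Z) : IZR b - 1 < IZR a -> IZR b <= IZR a.
Proof.
  intros Hab; apply IZR_le.
  assert (b < a + 1)%Z by (apply lt_IZR; rewrite plus_IZR; simpl; lra).
  lia.
Qed.

(* pi1, pi3 and pi4 are integers. *)
Lemma pi_sum_le_s2 n h : INR (s2 n h) > pi1 n h + pi3 n h + pi4 n h - 1 ->
  pi1 n h + pi3 n h + pi4 n h <= INR (s2 n h).
Proof.
  unfold pi1, pi3, pi4, Rfloor; rewrite !INR_IZR_INZ, <- !plus_IZR.
  apply IZR_le_of_gt_pred.
Qed.

Lemma sh3_nonneg n h : 0 <= sh3 n h.
Proof.
  apply sum1_nonneg; intros j; unfold indic, h3.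
  destruct (excluded_middle_informative _); [left; apply pow_lt|]; lra.
Qed.

Lemma sh4_nonneg n h : 0 <= sh4 n h.
Proof.
  apply sum1_nonneg; intros j; unfold indic, h4.
  destruct (excluded_middle_informative _); [|lra].
  pose proof (pow_lt (/2) (kexp (h j))); lra.
Qed.

Lemma H_PW_le_z_b n h : s2 n h <> 0%nat -> H_PW n h <= z_b n h.
Proof.
  intros Hs2; unfold H_PW; destruct (Nat.eqb_spec (s2 n h) 0) as [|_];
    [contradiction|apply Rmin_r].
Qed.

Lemma z_b_even_le n h k : s2 n h = (2 * k)%nat ->
  z_b n h <= 2 * maxS2 n h *
    (pi1 n h + pi3 n h + pi4 n h + INR k + (f3 n h + f4 n h) + 1).
Proof.
  intros Hk; unfold z_b, f2; rewrite Hk, Nat.div2_double, Nat.odd_mul; simpl.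
  pose proof (maxS2_range n h); pose proof (Rceil_le (0 + f3 n h + f4 n h)).
  apply Rmult_le_compat_l; lra.
Qed.

Lemma height_ge_lb n h sigma M k :
  valid_instance n h -> valid_schedule n sigma -> height_bounded_by n h sigma M ->
  s2 n h = (2 * k)%nat ->
  1/3 + 2/3 * (pi1 n h + sh3 n h + sh4 n h) + INR k - 1/2 + maxS2 n h <= M.
Proof.
  intros Hv Hs Hb Hk.
  pose proof (sum_rates_le_height n h sigma M Hs Hb).
  pose proof (sum_rates_ge_lb n h Hv).
  pose proof (maxS2_le_sh2 n h).
  assert (INR (s2 n h) = 2 * INR k) by (rewrite Hk, mult_INR; reflexivity).
  lra.
Qed.

Lemma pinwheel_ratio (m A F k : R) :
  1/2 < m <= 2/3 -> 0 <= A <= 2 * k -> 0 <= F <= 2 -> 2 <= k ->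
  2 * m * (A + k + F + 1) <= 32000/16947 * (1/3 + 2/3 * (A + F) + k - 1/2 + m).
Proof. intros; nra. Qed.

Theorem proposition3 (n : nat) (h : nat -> R) :
  valid_instance n h ->
  INR (s2 n h) > pi1 n h + pi3 n h + pi4 n h - 1 ->
  (4 <= s2 n h)%nat ->
  Nat.even (s2 n h) = true ->
  forall (sigma : nat -> nat) (M : R),
    valid_schedule n sigma ->
    height_bounded_by n h sigma M ->
    H_PW n h <= 32000 / 16947 * M.
Proof.
  intros Hv Hpi H4 Heven sigma M Hs Hb.
  destruct (proj1 (Nat.even_spec _) Heven) as [k Hk].
  assert (Hk2 : 2 <= INR k) by (apply (le_INR 2); lia).
  assert (Hs2 : INR (s2 n h) = 2 * INR k) by (rewrite Hk, mult_INR; reflexivity).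
  pose proof (pi_sum_le_s2 n h Hpi).
  pose proof (maxS2_range n h); pose proof (maxS2_gt_half n h ltac:(lia)).
  pose proof (pos_INR (card1 n inS1 h)).
  pose proof (Rfloor_nonneg _ (sh3_nonneg n h)); pose proof (frac_range (sh3 n h)).
  pose proof (Rfloor_nonneg _ (sh4_nonneg n h)); pose proof (frac_range (sh4 n h)).
  pose proof (height_ge_lb n h sigma M k Hv Hs Hb Hk).
  eapply Rle_trans; [apply H_PW_le_z_b; lia|].
  eapply Rle_trans; [apply z_b_even_le, Hk|].
  eapply Rle_trans; [apply pinwheel_ratio|apply Rmult_le_compat_l].
  all: unfold f3, f4, pi1, pi3, pi4 in *; lra.
Qed.
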